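(* Let $P\in\mathbb{Q}_{\ge0}^{N\times N}$ be the transition matrix of a reversible and ergodic Markov chain on $V$ with stationary distribution $\pi$ and mixing rate $t^*$. For the rotor-router model on a multidigraph for $P$, with any initial configuration, $$\left|\chi^{(T)}_w-\mu^{(T)}_w\right|\le\frac{3\pi_w}{\pi_{\min}}\,t^*\,\Delta\,\bar\Delta$$ for all $w\in V$ and $T\ge0$.
   Context: Let $V=\{1,\dots,N\}$ and let $P\in\mathbb{Q}_{\ge 0}^{N\times N}$ be an ergodic (irreducible, aperiodic) stochastic matrix with stationary distribution $\pi$; $\pi_{\min}=\min_v\pi_v$; reversible means $\pi_uP_{u,v}=\pi_vP_{v,u}$ for all $u,v$. For $v\in V$ let $\mathcal N(v)=\{u: P_{v,u}>0\}$, $\delta(v)=|\mathcal N(v)|$, $\Delta=\max_v\delta(v)$. Total variation distance $d_{TV}(\xi,\zeta)=\frac12\|\xi-\zeta\|_1$; mixing time $\tau(\varepsilon)=\max_{v}\min\{t\ge0: d_{TV}(P^t_{v,\cdot},\pi)\le\varepsilon\}$; mixing rate $t^*=\tau(1/4)$. For each $v$ let $\bar\delta(v)$ be a positive integer with $\bar\delta(v)P_{v,u}\in\mathbb{Z}$ for all $u$, and $\bar\Delta=\max_v\bar\delta(v)$. The rotor router: $\sigma_v(0),\dots,\sigma_v(\bar\delta(v)-1)\in\mathcal N(v)$ is any sequence in which each $u\in\mathcal N(v)$ occurs exactly $\bar\delta(v)P_{v,u}$ times, extended by $\sigma_v(i)=\sigma_v(i\bmod\bar\delta(v))$. Write $I_{v,u}[z,z')=|\{j\in\{z,\dots,z'-1\}:\sigma_v(j)=u\}|$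 (zero if $z'\le z$). Given $\chi^{(0)}\in\mathbb{Z}_{\ge0}^N$, set $Z^{(t)}_{v,u}=I_{v,u}\big[\sum_{s=0}^{t-1}\chi^{(s)}_v,\sum_{s=0}^{t}\chi^{(s)}_v\big)$, $\chi^{(t+1)}_u=\sum_vZ^{(t)}_{v,u}$, $\mu^{(0)}=\chi^{(0)}$, $\mu^{(t)}=\mu^{(0)}P^t$. *)

From HB Require Import structures.
From mathcomp Require Import all_boot all_order all_algebra.
Set Implicit Arguments. Unset Strict Implicit. Unset Printing Implicit Defensive.
Import Order.TTheory GRing.Theory Num.Theory.
Local Open Scope ring_scope.

Definition stochastic (N : nat) (P : 'M[rat]_N) : Prop :=
  (forall u v, 0 <= P u v) /\ (forall u, \sum_(v < N) P u v = 1).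

Definition irreducible (N : nat) (P : 'M[rat]_N) : Prop :=
  forall u v, exists t : nat, 0 < (P ^+ t) u v.

Definition aperiodic (N : nat) (P : 'M[rat]_N) : Prop :=
  forall v (d : nat),
    (forall t : nat, (0 < t)%N -> 0 < (P ^+ t) v v -> (d %| t)%N) -> d = 1%N.

Definition ergodic (N : nat) (P : 'M[rat]_N) : Prop :=
  irreducible P /\ aperiodic P.

Definition stationary (N : nat) (P : 'M[rat]_N) (pi : 'rV[rat]_N) : Prop :=
  (forall v, 0 <= pi 0 v) /\ \sum_(v < N) pi 0 v = 1 /\ pi *m P = pi.

Definition reversible (N : nat) (P : 'M[rat]_N) (pi : 'rV[rat]_N) : Prop :=
  forall u v, pi 0 u * P u v = pi 0 v * P v u.

(* pi_min = min_v pi_v  (idx 1 is harmless since pi is a distribution) *)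
Definition pi_min (N : nat) (pi : 'rV[rat]_N) : rat :=
  \big[Num.min/1]_(v < N) pi 0 v.

Definition dTV_row (N : nat) (P : 'M[rat]_N) (pi : 'rV[rat]_N) (v : 'I_N)
  (t : nat) : rat :=
  2^-1 * \sum_(u < N) `|(P ^+ t) v u - pi 0 u|.

Definition is_mix_time_from (N : nat) (P : 'M[rat]_N) (pi : 'rV[rat]_N)
  (eps : rat) (v : 'I_N) (t : nat) : Prop :=
  dTV_row P pi v t <= eps /\ (forall s : nat, (s < t)%N -> eps < dTV_row P pi v s).

(* T = tau(eps) = max_v min{ t : d_TV(P^t_{v,.}, pi) <= eps } *)
Definition is_mixing_time (N : nat) (P : 'M[rat]_N) (pi : 'rV[rat]_N)
  (eps : rat) (T : nat) : Prop :=
  (forall v, exists tv, is_mix_time_from P pi eps v tv /\ (tv <= T)%N) /\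
  (exists v, is_mix_time_from P pi eps v T).

Definition is_mixing_rate (N : nat) (P : 'M[rat]_N) (pi : 'rV[rat]_N)
  (T : nat) : Prop := is_mixing_time P pi (4^-1) T.

Definition outdeg (N : nat) (P : 'M[rat]_N) (v : 'I_N) : nat :=
  #|[set u : 'I_N | 0 < P v u]|.
Definition Delta (N : nat) (P : 'M[rat]_N) : nat := (\max_(v < N) outdeg P v)%N.

Definition Delta_bar (N : nat) (dbar : 'I_N -> nat) : nat := (\max_(v < N) dbar v)%N.

Definition rotor_router (N : nat) (P : 'M[rat]_N) (dbar : 'I_N -> nat)
  (sigma : 'I_N -> nat -> 'I_N) : Prop :=
  (forall v, (0 < dbar v)%N) /\
  (forall v u, (dbar v)%:R * P v u \is a Num.int) /\
  (forall v (i : nat), sigma v i = sigma v (i %% dbar v)%N) /\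
  (forall v (i : nat), (i < dbar v)%N -> 0 < P v (sigma v i)) /\
  (forall v u, (#|[set j : 'I_(dbar v) | sigma v j == u]|)%:R = (dbar v)%:R * P v u).

Definition Icount (N : nat) (sigma : 'I_N -> nat -> 'I_N) (v u : 'I_N) (z z' : nat) : nat :=
  (\sum_(z <= j < z') (sigma v j == u))%N.

(* (chi^(t), sum_{s<t} chi^(s)) *)
Fixpoint rr_state (N : nat) (sigma : 'I_N -> nat -> 'I_N) (chi0 : 'I_N -> nat) (t : nat)
  : ('I_N -> nat) * ('I_N -> nat) :=
  match t with
  | O => (chi0, fun _ => 0%N)
  | t'.+1 =>
      let c := (rr_state sigma chi0 t').1 in
      let S := (rr_state sigma chi0 t').2 in
      (fun u => (\sum_(v < N) Icount sigma v u (S v) (S v + c v))%N,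
       fun v => (S v + c v)%N)
  end.

Definition rr_chi (N : nat) (sigma : 'I_N -> nat -> 'I_N) (chi0 : 'I_N -> nat) (t : nat)
  : 'I_N -> nat := (rr_state sigma chi0 t).1.

Definition rw_mu (N : nat) (P : 'M[rat]_N) (chi0 : 'I_N -> nat) (t : nat) : 'rV[rat]_N :=
  (\row_(v < N) (chi0 v)%:R) *m P ^+ t.

From HB Require Import structures.
From mathcomp Require Import all_boot all_order all_algebra.
From mathcomp Require Import ring lra zify.
Import Order.TTheory GRing.Theory Num.Theory.
Local Open Scope ring_scope.
Set Implicit Arguments. Unset Strict Implicit.

(* Write e^(t) = chi^(t+1) - chi^(t) P for the rounding error of step t.  The
   discrepancy telescopes: chi^(T) - mu^(T) = sum_(t<T) e^(t) P^(T-t-1).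
   - Every e^(t) sums to zero (rotors conserve tokens) and |e^(t)_v| <= Delta
     Delta_bar: a rotor deviates from its expected flow by less than one period
     dbar(u), and by reversibility v has at most Delta in-neighbours.
   - Hence the w-entry of e^(t) P^m is at most Delta Delta_bar times
     sum_v |P^m_vw - pi_w|, which reversibility bounds by (pi_w / pi_min) D_w(m)
     with D_w(m) = sum_v |P^m_wv - pi_v| (twice a total variation distance).
   - D_w is at most 2, nonincreasing, halves every t^* steps and is at most 1/2
     from time t^* on, so sum_(s<T) D_w(s) <= 3 t^* (a geometric series). *)

Section HalvingSequences.
Variable R : realFieldType.

(* If f halves every tau steps and is at most 1/2 from time tau on, its tail
   from tau sums to at most tau: consecutive blocks of length tau contribute at
   most tau/2, tau/4, ... *)
Lemma halving_tail_sum (f : nat -> R) (tau : nat) :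
  (forall s, f (s + tau)%N <= f s / 2) -> (forall s, f (s + tau)%N <= 2^-1) ->
  forall n, \sum_(0 <= s < n) f (s + tau)%N <= tau%:R.
Proof.
move=> halve small.
case: (posnP tau) => [tau0|tau_gt0]; first subst tau.
  move=> n; apply: le_trans (sumr_le0 _ _) _ => // s _.
  by have := halve s; rewrite addn0; lra.
elim/ltn_ind=> n IH.
have [n_le_tau|tau_lt_n] := leqP n tau.
  apply: le_trans (_ : \sum_(0 <= s < n) (2^-1 : R) <= _); first exact: ler_sum.
  rewrite sumr_const_nat subn0 -mulr_natr.
  have : (n%:R : R) <= tau%:R by rewrite ler_nat.
  by have := ler0n R n; lra.
rewrite -(subnKC (ltnW tau_lt_n)) (big_cat_nat (n := tau)) ?leq_addr //=.
rewrite -{3}[tau]add0n big_addn addKn.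
have first_block : \sum_(0 <= s < tau) f (s + tau)%N <= tau%:R / 2.
  apply: le_trans (_ : \sum_(0 <= s < tau) (2^-1 : R) <= _); first exact: ler_sum.
  by rewrite sumr_const_nat subn0 -mulr_natr; have := ler0n R tau; lra.
have rest : \sum_(0 <= s < n - tau) f (s + tau + tau)%N
            <= (\sum_(0 <= s < n - tau) f (s + tau)%N) / 2.
  by rewrite mulr_suml; apply: ler_sum => s _; apply: halve.
have := IH (n - tau)%N ltac:(lia); lra.
Qed.

(* Adding a first block bounded by 2 tau gives the bound 3 tau for the full sum. *)
Lemma halving_sum (f : nat -> R) (tau : nat) :
  (forall s, f s <= 2) -> (forall s, f (s + tau)%N <= f s / 2) ->
  (forall s, f (s + tau)%N <= 2^-1) ->
  forall T, \sum_(0 <= s < T) f s <= 3 * tau%:R.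
Proof.
move=> le2 halve small T.
have crude m : \sum_(0 <= s < m) f s <= 2 * m%:R.
  apply: le_trans (_ : \sum_(0 <= s < m) (2 : R) <= _); first exact: ler_sum.
  by rewrite sumr_const_nat subn0 mulr_natr.
have [T_le_tau|tau_lt_T] := leqP T tau.
  have : (T%:R : R) <= tau%:R by rewrite ler_nat.
  by have := crude T; have := ler0n R T; lra.
rewrite -(subnKC (ltnW tau_lt_T)) (big_cat_nat (n := tau)) ?leq_addr //=.
rewrite -{2}[tau]add0n big_addn addKn.
by have := crude tau; have := halving_tail_sum halve small (T - tau); lra.
Qed.

End HalvingSequences.

Section MatrixPowers.
Variable R : pzSemiRingType.
Variable N : nat.
Implicit Types (A : 'M[R]_N) (i j : 'I_N).

Lemma id_mx_entry i j : (1 : 'M[R]_N) i j = (i == j)%:R.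
Proof. by rewrite -[1]/(1%:M) mxE. Qed.

Lemma mxpow_entryD A s t i j :
  (A ^+ (s + t)) i j = \sum_k (A ^+ s) i k * (A ^+ t) k j.
Proof. by rewrite exprD -mulmxE mxE. Qed.

Lemma mxpow_entrySr A s i j : (A ^+ s.+1) i j = \sum_k (A ^+ s) i k * A k j.
Proof. by rewrite exprSr -mulmxE mxE. Qed.

Lemma mxpow_entrySl A s i j : (A ^+ s.+1) i j = \sum_k A i k * (A ^+ s) k j.
Proof. by rewrite exprS -mulmxE mxE. Qed.

End MatrixPowers.

Section StochasticMatrices.
Variables (N : nat) (P : 'M[rat]_N) (pi : 'rV[rat]_N).
Hypothesis P_stoch : stochastic P.

Lemma stoch_entry_le1 u v : P u v <= 1.
Proof.
have [P_ge0 P_rows] := P_stoch.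
by rewrite -(P_rows u) (bigD1 v) //= lerDl sumr_ge0.
Qed.

Lemma mxpow_ge0 t u v : 0 <= (P ^+ t) u v.
Proof.
have [P_ge0 _] := P_stoch.
elim: t u v => [|t IH] u v; first by rewrite expr0 id_mx_entry ler0n.
by rewrite mxpow_entrySr sumr_ge0 // => k _; rewrite mulr_ge0.
Qed.

Lemma mxpow_row_sum t u : \sum_v (P ^+ t) u v = 1.
Proof.
have [_ P_rows] := P_stoch.
elim: t u => [|t IH] u.
  rewrite expr0 (bigD1 u) //= id_mx_entry eqxx big1 ?addr0 // => v /negPf vu.
  by rewrite id_mx_entry eq_sym vu.
under eq_bigr do rewrite mxpow_entrySr.
rewrite exchange_big /= -(IH u); apply: eq_bigr => k _.
by rewrite -mulr_sumr P_rows mulr1.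
Qed.

Hypothesis pi_stat : stationary P pi.

Lemma stationary_mxpow t v : \sum_u pi 0 u * (P ^+ t) u v = pi 0 v.
Proof.
have [_ [_ piP]] := pi_stat.
have pi_inv : pi *m P ^+ t = pi.
  elim: t => [|t IH]; first by rewrite expr0 mulmx1.
  by rewrite exprSr -mulmxE mulmxA IH piP.
by rewrite -{2}pi_inv mxE.
Qed.

(* Under irreducibility the stationary distribution charges every state:
   some state u0 has positive mass, and every v is reached from u0. *)
Lemma stationary_pos : irreducible P -> forall v, 0 < pi 0 v.
Proof.
have [pi_ge0 [pi_sum1 _]] := pi_stat.
move=> P_irr v.
have [u0 pi_u0] : exists u, 0 < pi 0 u.
  case: (pickP (fun u => 0 < pi 0 u)) => [u pi_u|none_pos]; first by exists u.
  suff : \sum_u pi 0 u <= 0 by rewrite pi_sum1 ler10.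
  by apply: sumr_le0 => u _; rewrite leNgt none_pos.
have [t Pt_pos] := P_irr u0 v.
rewrite -(stationary_mxpow t) (bigD1 u0) //=.
apply: (lt_le_trans (mulr_gt0 pi_u0 Pt_pos)).
by rewrite lerDl sumr_ge0 // => u _; rewrite mulr_ge0 ?mxpow_ge0.
Qed.

End StochasticMatrices.

Lemma reversible_mxpow N (P : 'M[rat]_N) pi : reversible P pi ->
  forall s v w, pi 0 v * (P ^+ s) v w = pi 0 w * (P ^+ s) w v.
Proof.
move=> P_rev; elim=> [|s IH] v w.
  by rewrite expr0 !id_mx_entry eq_sym; case: eqP => [->|]; rewrite ?mulr0.
rewrite mxpow_entrySr mxpow_entrySl !mulr_sumr; apply: eq_bigr => k _.
by rewrite mulrA IH -mulrA [(P ^+ s) k v * _]mulrC mulrA P_rev -mulrA.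
Qed.

(* twice the total variation distance between the law of the chain after s
   steps from w and the stationary distribution *)
Definition dist_to_pi N (P : 'M[rat]_N) (pi : 'rV[rat]_N) (w : 'I_N) (s : nat) : rat :=
  \sum_v `|(P ^+ s) w v - pi 0 v|.

Section DistanceToStationarity.
Variables (N : nat) (P : 'M[rat]_N) (pi : 'rV[rat]_N).
Hypotheses (P_stoch : stochastic P) (pi_stat : stationary P pi).
Local Notation D := (dist_to_pi P pi).

(* Both the row of P^s and pi are probability vectors. *)
Lemma dist_le2 w s : D w s <= 2.
Proof.
have [pi_ge0 [pi_sum1 _]] := pi_stat.
apply: le_trans (_ : \sum_v ((P ^+ s) w v + pi 0 v) <= _).
  apply: ler_sum => v _; apply: le_trans (ler_normB _ _) _.
  by rewrite !ger0_norm ?pi_ge0 ?mxpow_ge0.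
by rewrite big_split /= mxpow_row_sum // pi_sum1.
Qed.

(* Submultiplicativity: as pi P^t = pi and the rows of P^t sum to one,
   P^(s+t)_wj - pi_j = sum_u (P^s_wu - pi_u) (P^t_uj - pi_j). *)
Lemma dist_submult w s t :
  D w (s + t) <= \sum_u `|(P ^+ s) w u - pi 0 u| * D u t.
Proof.
have [_ [pi_sum1 _]] := pi_stat.
have expand j : (P ^+ (s + t)) w j - pi 0 j
    = \sum_u ((P ^+ s) w u - pi 0 u) * ((P ^+ t) u j - pi 0 j).
  under eq_bigr do rewrite mulrBl !mulrBr.
  rewrite !sumrB -mxpow_entryD stationary_mxpow // -!mulr_suml mxpow_row_sum //.
  by rewrite pi_sum1 !mul1r subrr subr0.
rewrite /dist_to_pi; under eq_bigr do rewrite expand.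
apply: le_trans (_ : \sum_j \sum_u
    `|(P ^+ s) w u - pi 0 u| * `|(P ^+ t) u j - pi 0 j| <= _).
  apply: ler_sum => j _; apply: le_trans (ler_norm_sum _ _ _) _.
  by apply: ler_sum => u _; rewrite normrM.
by rewrite exchange_big /=; apply: ler_sum => u _; rewrite mulr_sumr.
Qed.

Lemma dist_step w s : D w s.+1 <= D w s.
Proof.
have [P_ge0 P_rows] := P_stoch; have [_ [_ piP]] := pi_stat.
have expand j : (P ^+ s.+1) w j - pi 0 j = \sum_u ((P ^+ s) w u - pi 0 u) * P u j.
  under eq_bigr do rewrite mulrBl.
  by rewrite sumrB -mxpow_entrySr -{1}piP mxE.
rewrite /dist_to_pi; under eq_bigr do rewrite expand.
apply: le_trans (_ : \sum_j \sum_u `|(P ^+ s) w u - pi 0 u| * P u j <= _).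
  apply: ler_sum => j _; apply: le_trans (ler_norm_sum _ _ _) _.
  by apply: ler_sum => u _; rewrite normrM (ger0_norm (P_ge0 u j)).
rewrite exchange_big /=; apply: ler_sum => u _.
by rewrite -mulr_sumr P_rows mulr1.
Qed.

Lemma dist_nonincreasing w s t : (s <= t)%N -> D w t <= D w s.
Proof.
move/subnKC <-; elim: (t - s)%N => [|r IH]; first by rewrite addn0.
by rewrite addnS; apply: le_trans (dist_step _ _) IH.
Qed.

Lemma dist_at_mixing_rate tstar : is_mixing_rate P pi tstar ->
  forall u, D u tstar <= 2^-1.
Proof.
move=> [mixes _] u; have [tu [[dTV_tu _] tu_le]] := mixes u.
apply: le_trans (dist_nonincreasing u tu_le) _.
by move: dTV_tu; rewrite /dTV_row -/(D u tu); lra.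
Qed.

Lemma dist_sum_le tstar : is_mixing_rate P pi tstar ->
  forall w T, \sum_(0 <= s < T) D w s <= 3 * tstar%:R.
Proof.
move=> mix w T; apply: halving_sum => [s|s|s]; first exact: dist_le2.
  apply: le_trans (dist_submult _ _ _) _.
  rewrite mulr_suml; apply: ler_sum => u _.
  by apply: ler_wpM2l => //; apply: dist_at_mixing_rate.
by rewrite addnC; apply: le_trans (dist_nonincreasing w (leq_addr _ _)) _;
   apply: dist_at_mixing_rate.
Qed.

End DistanceToStationarity.

Lemma pi_min_gt0 N (pi : 'rV[rat]_N) : (forall v, 0 < pi 0 v) -> 0 < pi_min pi.
Proof.
move=> pi_gt0; apply: (big_ind (fun x => 0 < x)) => // x y x_gt0 y_gt0.
by rewrite lt_min x_gt0 y_gt0.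
Qed.

(* Reversibility transfers the distance from time-reversed rows:
   |P^m_vw - pi_w| = (pi_w / pi_v) |P^m_wv - pi_v| <= (pi_w / pi_min) |P^m_wv - pi_v|. *)
Lemma reversed_deviation N (P : 'M[rat]_N) pi : reversible P pi ->
  (forall v, 0 < pi 0 v) -> forall m v w,
  `|(P ^+ m) v w - pi 0 w| <= pi 0 w / pi_min pi * `|(P ^+ m) w v - pi 0 v|.
Proof.
move=> P_rev pi_gt0 m v w.
have pi_v_neq0 : pi 0 v != 0 by rewrite lt0r_neq0.
have -> : (P ^+ m) v w - pi 0 w = pi 0 w / pi 0 v * ((P ^+ m) w v - pi 0 v).
  by rewrite mulrBr divfK // mulrAC -(reversible_mxpow P_rev) [pi 0 v * _]mulrC mulfK.
rewrite normrM ger0_norm; last by apply: divr_ge0; apply: ltW.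
apply: ler_wpM2r => //; apply: ler_wpM2l; first exact: ltW.
by rewrite lef_pV2 ?posrE ?pi_min_gt0 //; apply: bigmin_le.
Qed.

Section RotorCounts.
Variables (N : nat) (sigma : 'I_N -> nat -> 'I_N) (u : 'I_N).

Lemma Icount_split v a b c : (a <= b)%N -> (b <= c)%N ->
  Icount sigma u v a c = (Icount sigma u v a b + Icount sigma u v b c)%N.
Proof. by move=> le_ab le_bc; rewrite /Icount (big_cat_nat le_ab le_bc). Qed.

Lemma Icount_le_length v z r : (Icount sigma u v z (z + r) <= r)%N.
Proof.
rewrite /Icount; apply: leq_trans (_ : \sum_(z <= j < z + r) 1 <= _)%N.
  by apply: leq_sum => j _; case: eqP.
by rewrite sum_nat_const_nat addnC addnK muln1.
Qed.

(* Every step of the rotor at u goes to exactly one target. *)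
Lemma Icount_targets z z' : (\sum_v Icount sigma u v z z')%N = (z' - z)%N.
Proof.
rewrite /Icount exchange_big /=.
rewrite -[(z' - z)%N]muln1 -sum_nat_const_nat; apply: eq_bigr => j _.
rewrite (bigD1 (sigma u j)) //= eqxx big1 ?addn0 // => v.
by rewrite eq_sym => /negPf ->.
Qed.

Section Periodic.
Variables (d : nat) (v : 'I_N).
Hypothesis sigma_periodic : forall i, sigma u i = sigma u (i %% d)%N.

Lemma Icount_period_shift z : Icount sigma u v z (z + d) = Icount sigma u v 0 d.
Proof.
elim: z => [|z IH]; first by rewrite add0n.
rewrite -IH /Icount.
have same_ends : sigma u (z + d)%N = sigma u z.
  by rewrite sigma_periodic modnDr -sigma_periodic.
have dropl : (\sum_(z <= j < (z + d).+1) (sigma u j == v) =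
    (sigma u z == v) + \sum_(z.+1 <= j < z.+1 + d) (sigma u j == v))%N.
  by rewrite big_ltn ?ltnS ?leq_addr // addSn.
have dropr : (\sum_(z <= j < (z + d).+1) (sigma u j == v) =
    \sum_(z <= j < z + d) (sigma u j == v) + (sigma u (z + d) == v))%N.
  by rewrite big_nat_recr //= leq_addr.
apply: (@addnI (sigma u z == v)).
by rewrite -dropl dropr same_ends addnC.
Qed.

Lemma Icount_periods q z :
  Icount sigma u v z (z + q * d) = (q * Icount sigma u v 0 d)%N.
Proof.
elim: q z => [|q IH] z; first by rewrite mul0n addn0 /Icount big_geq.
rewrite mulSnr addnA (@Icount_split v z (z + q * d)) ?leq_addr // IH.
by rewrite Icount_period_shift mulSnr.
Qed.

End Periodic.

Lemma Icount_period_card (d : nat) v :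
  Icount sigma u v 0 d = #|[set j : 'I_d | sigma u j == v]|.
Proof.
rewrite /Icount big_mkord cardsE -sum1_card [RHS]big_mkcond /=.
apply: eq_bigr => j _; rewrite unfold_in /= -[eqn _ _]/(sigma u j == v).
by case: (sigma u j == v).
Qed.

End RotorCounts.

(* The last, partial period: a <= r visits out of r <= d steps deviate from the
   expected r p by at most d. *)
Lemma partial_period_deviation (R : realFieldType) (p a r d : R) :
  0 <= p -> p <= 1 -> 0 <= a -> a <= r -> r <= d -> `|a - r * p| <= d.
Proof.
move=> p_ge0 p_le1 a_ge0 a_le_r r_le_d.
have r_ge0 : 0 <= r := le_trans a_ge0 a_le_r.
have rp_ge0 : 0 <= r * p := mulr_ge0 r_ge0 p_ge0.
have rp_le_r : r * p <= r := ler_piMr r_ge0 p_le1.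
by rewrite ler_norml; apply/andP; split; lra.
Qed.

Section RotorRouter.
Variables (N : nat) (P : 'M[rat]_N) (dbar : 'I_N -> nat) (sigma : 'I_N -> nat -> 'I_N).
Hypotheses (P_stoch : stochastic P) (rotor : rotor_router P dbar sigma).

Lemma rotor_no_visit u v z z' : ~~ (0 < P u v) -> Icount sigma u v z z' = 0%N.
Proof.
have [dbar_gt0 [_ [periodic [valid _]]]] := rotor.
move=> Puv_le0; rewrite /Icount; apply: big1 => j _; case: eqP => // sigma_j.
have := valid u (j %% dbar u)%N (ltn_pmod _ (dbar_gt0 u)).
by rewrite -periodic sigma_j (negbTE Puv_le0).
Qed.

(* Over any c consecutive steps the rotor at u sends c P_uv tokens to v,
   up to an error of dbar(u): full periods are exact. *)
Lemma rotor_deviation u v z c : 0 < P u v ->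
  `|(Icount sigma u v z (z + c))%:R - c%:R * P u v| <= (dbar u)%:R.
Proof.
have [dbar_gt0 [_ [periodic [_ counts]]]] := rotor.
move=> Puv_gt0.
move: (divn_eq c (dbar u)) (ltn_pmod c (dbar_gt0 u)).
move: (c %/ dbar u)%N (c %% dbar u)%N => q r -> r_lt_d.
rewrite addnA (@Icount_split _ sigma u v z (z + q * dbar u)) ?leq_addr //.
rewrite (@Icount_periods _ sigma u (dbar u) v (periodic u)).
rewrite !natrD !natrM Icount_period_card counts.
have := @Icount_le_length _ sigma u v (z + q * dbar u) r.
move: (Icount _ _ _ _ _) => a a_le_r.
have -> : q%:R * ((dbar u)%:R * P u v) + a%:R - (q%:R * (dbar u)%:R + r%:R) * P u v
        = a%:R - r%:R * P u v by ring.
apply: partial_period_deviation.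
- exact: ltW.
- exact: stoch_entry_le1.
- exact: ler0n.
- by rewrite ler_nat.
- by rewrite ler_nat ltnW.
Qed.

Definition rr_row (chi0 : 'I_N -> nat) (t : nat) : 'rV[rat]_N :=
  \row_v (rr_chi sigma chi0 t v)%:R.

Definition rr_error (chi0 : 'I_N -> nat) (t : nat) : 'rV[rat]_N :=
  rr_row chi0 t.+1 - rr_row chi0 t *m P.

Variable chi0 : 'I_N -> nat.

Lemma rr_error_entry t v : rr_error chi0 t 0 v =
  \sum_u ((Icount sigma u v ((rr_state sigma chi0 t).2 u)
             ((rr_state sigma chi0 t).2 u + rr_chi sigma chi0 t u))%:R
          - (rr_chi sigma chi0 t u)%:R * P u v).
Proof.
rewrite sumrB -natr_sum /rr_error !mxE; congr (_ - _).
by apply: eq_bigr => u _; rewrite mxE.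
Qed.

(* Rotors conserve tokens, so the rounding errors sum to zero. *)
Lemma rr_error_sum0 t : \sum_v rr_error chi0 t 0 v = 0.
Proof.
have [_ P_rows] := P_stoch.
under eq_bigr do rewrite rr_error_entry.
rewrite exchange_big /=; apply: big1 => u _.
by rewrite sumrB -natr_sum Icount_targets addKn -mulr_sumr P_rows mulr1 subrr.
Qed.

(* Each node v receives from at most Delta in-neighbours (by reversibility the
   in-neighbours of v are out-neighbours), each with error at most Delta_bar. *)
Lemma rr_error_bound pi : reversible P pi -> (forall v, 0 < pi 0 v) ->
  forall t v, `|rr_error chi0 t 0 v| <= (Delta_bar dbar)%:R * (Delta P)%:R.
Proof.
move=> P_rev pi_gt0 t v.
rewrite rr_error_entry; apply: le_trans (ler_norm_sum _ _ _) _.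
apply: le_trans (_ : \sum_u (if 0 < P v u then (Delta_bar dbar)%:R else 0) <= _).
  apply: ler_sum => u _; case: (boolP (0 < P u v)) => [Puv_gt0|Puv_le0].
    have -> : 0 < P v u.
      by rewrite -(pmulr_rgt0 _ (pi_gt0 v)) -P_rev; apply: mulr_gt0.
    apply: le_trans (@rotor_deviation u v _ _ Puv_gt0) _.
    by rewrite /= ler_nat /Delta_bar (leq_bigmax u).
  have [P_ge0 _] := P_stoch.
  have Puv0 : P u v = 0 by apply/eqP; rewrite eq_le P_ge0 andbT leNgt.
  rewrite rotor_no_visit // Puv0 mulr0 subr0 mulr0n normr0.
  by case: ifP.
have count_out : \sum_u (if 0 < P v u then (Delta_bar dbar)%:R else 0)
    = (Delta_bar dbar)%:R * (outdeg P v)%:R :> rat.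
  by rewrite -big_mkcond /= sumr_const /outdeg cardsE mulr_natr.
rewrite count_out; apply: ler_wpM2l => //; rewrite ler_nat.
exact: (leq_bigmax (F := outdeg P) v).
Qed.

Lemma rr_discrepancy T :
  rr_row chi0 T - rw_mu P chi0 T = \sum_(t < T) rr_error chi0 t *m P ^+ (T - t.+1).
Proof.
elim: T => [|T IH]; first by rewrite big_ord0 /rw_mu expr0 mulmx1 subrr.
have mu_step : rw_mu P chi0 T.+1 = rw_mu P chi0 T *m P.
  by rewrite /rw_mu exprSr -mulmxE mulmxA.
have error_step : rr_row chi0 T.+1 - rw_mu P chi0 T *m P
    = rr_error chi0 T + (rr_row chi0 T - rw_mu P chi0 T) *m P.
  by rewrite mulmxBl /rr_error addrA subrK.
rewrite big_ord_recr /= subnn expr0 mulmx1 mu_step error_step IH mulmx_suml addrC.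
congr (_ + _); apply: eq_bigr => t _.
by rewrite -mulmxA mulmxE -exprSr subSS (subnSK (ltn_ord t)).
Qed.

Lemma rr_discrepancy_entry T w :
  (rr_chi sigma chi0 T w)%:R - rw_mu P chi0 T 0 w
  = \sum_(t < T) \sum_v rr_error chi0 t 0 v * (P ^+ (T - t.+1)) v w.
Proof.
move: (rr_discrepancy T); move: (rw_mu P chi0 T) => mu.
move=> /(congr1 (fun M : 'rV[rat]_N => M 0 w)).
rewrite !mxE summxE => ->.
by apply: eq_bigr => t _; rewrite mxE.
Qed.

(* Since the errors of one step sum to zero, only the deviation of P^m from
   its limit pi matters; reversibility lets us measure that deviation from w. *)
Lemma rr_error_propagated pi : stationary P pi -> reversible P pi ->
  (forall v, 0 < pi 0 v) -> forall t m w,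
  `|\sum_v rr_error chi0 t 0 v * (P ^+ m) v w|
    <= (Delta_bar dbar)%:R * (Delta P)%:R * (pi 0 w / pi_min pi) * dist_to_pi P pi w m.
Proof.
move=> pi_stat P_rev pi_gt0 t m w.
have centered : \sum_v rr_error chi0 t 0 v * (P ^+ m) v w
    = \sum_v rr_error chi0 t 0 v * ((P ^+ m) v w - pi 0 w).
  under [RHS]eq_bigr do rewrite mulrBr.
  by rewrite sumrB -mulr_suml rr_error_sum0 mul0r subr0.
rewrite centered /dist_to_pi !mulr_sumr; apply: le_trans (ler_norm_sum _ _ _) _.
apply: ler_sum => v _; rewrite normrM -mulrA.
apply: ler_pM; [exact: normr_ge0 | exact: normr_ge0 | |].
  exact: (rr_error_bound P_rev pi_gt0).
exact: reversed_deviation.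
Qed.

End RotorRouter.

Theorem theorem5p9 (N : nat) (P : 'M[rat]_N) (pi : 'rV[rat]_N) (tstar : nat)
  (dbar : 'I_N -> nat) (sigma : 'I_N -> nat -> 'I_N) (chi0 : 'I_N -> nat) :
  stochastic P -> ergodic P -> stationary P pi -> reversible P pi ->
  is_mixing_rate P pi tstar ->
  rotor_router P dbar sigma ->
  forall (w : 'I_N) (T : nat),
    `|(rr_chi sigma chi0 T w)%:R - rw_mu P chi0 T 0 w|
      <= 3 * pi 0 w / pi_min pi * tstar%:R * (Delta P)%:R * (Delta_bar dbar)%:R.
Proof.
move=> P_stoch [P_irr _] pi_stat P_rev mix rotor w T.
have pi_gt0 := stationary_pos P_stoch pi_stat P_irr.
pose K := (Delta_bar dbar)%:R * (Delta P)%:R * (pi 0 w / pi_min pi).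
have K_ge0 : 0 <= K.
  apply: mulr_ge0; first exact: mulr_ge0.
  by apply: divr_ge0; apply: ltW; [exact: pi_gt0 | exact: pi_min_gt0].
rewrite rr_discrepancy_entry; apply: le_trans (ler_norm_sum _ _ _) _.
apply: le_trans (_ : \sum_(t < T) K * dist_to_pi P pi w (T - t.+1) <= _).
  by apply: ler_sum => t _; apply: rr_error_propagated.
have reversed : \sum_(t < T) dist_to_pi P pi w (T - t.+1)
                = \sum_(0 <= s < T) dist_to_pi P pi w s.
  by rewrite [RHS]big_nat_rev big_mkord add0n.
rewrite -mulr_sumr reversed.
apply: le_trans (ler_wpM2l K_ge0 (dist_sum_le P_stoch pi_stat mix w T)) _.
by rewrite le_eqVlt; apply/orP; left; apply/eqP; rewrite /K; ring.
Qed.
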